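(* Consider the two-source game ($m=2$) with $n_1\ge n_2\ge 0$, $n_1\ge 1$, and any $\phi>0$, $\mu>0$, $q\in[0,1]$. There exists a (pure) Nash equilibrium in which $u_1>0$ and $u_2=n_2$, where $u_i$ denotes the number of users of $N_i$ choosing the direct path.
   Context: Two-source network: sources $s_1,s_2$ and destination $d$; source $s_i$ has a set $N_i$ of $n_i$ users. Each user generates an independent Poisson flow of packets of rate $\phi>0$; each direct link $(s_i,d)$ has service rate $\mu>0$; the sidelink between $s_1$ and $s_2$ loses packets independently with probability $q$, and $\bar q=1-q$. Only pure strategies are considered: a user of $N_1$ chooses DP $(s_1,d)$ or IP $(s_1,s_2,d)$; a user of $N_2$ chooses DP $(s_2,d)$ or IP $(s_2,s_1,d)$. With $u_i$ users of $N_i$ on DP, $T_1=u_1\phi+(n_2-u_2)\bar q\phi$ and $T_2=u_2\phi+(n_1-u_1)\bar q\phi$. The loss rate of a user of $N_i$ is $\phi\frac{T_i}{T_i+\mu}$ on DP and $\phi\left(q+\bar q\frac{T_j}{T_j+\mu}\right)$ on IP to $s_j$, $j\neq i$. A Nash equilibrium is a pure profile in which no user can strictly decrease its loss rate by unilaterally switching its route. *)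

From mathcomp Require Import all_boot all_order all_algebra.
Set Implicit Arguments. Unset Strict Implicit. Unset Printing Implicit Defensive.
Import Order.TTheory GRing.Theory Num.Theory.
Local Open Scope ring_scope.

(* Two-source game. A pure profile: for each user of N_1 (indexed by 'I_n1)
   and each user of N_2 (indexed by 'I_n2), a boolean: true = DP, false = IP. *)
Section Game.
Variable R : realFieldType.
Variables (phi mu q : R).

Definition ndp (n : nat) (s : {ffun 'I_n -> bool}) : nat := #|[set i | s i]|.

Definition load1 (n2 u1 u2 : nat) : R :=
  u1%:R * phi + (n2 - u2)%:R * (1 - q) * phi.
Definition load2 (n1 u1 u2 : nat) : R :=
  u2%:R * phi + (n1 - u1)%:R * (1 - q) * phi.

Definition loss_dp (T : R) : R := phi * (T / (T + mu)).
Definition loss_ip (T' : R) : R := phi * (q + (1 - q) * (T' / (T' + mu))).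

Definition loss1 n1 n2 (s1 : {ffun 'I_n1 -> bool}) (s2 : {ffun 'I_n2 -> bool})
  (i : 'I_n1) : R :=
  let u1 := ndp s1 in let u2 := ndp s2 in
  if s1 i then loss_dp (load1 n2 u1 u2) else loss_ip (load2 n1 u1 u2).

Definition loss2 n1 n2 (s1 : {ffun 'I_n1 -> bool}) (s2 : {ffun 'I_n2 -> bool})
  (j : 'I_n2) : R :=
  let u1 := ndp s1 in let u2 := ndp s2 in
  if s2 j then loss_dp (load2 n1 u1 u2) else loss_ip (load1 n2 u1 u2).

Definition deviate n (s : {ffun 'I_n -> bool}) (i : 'I_n) (b : bool)
  : {ffun 'I_n -> bool} := [ffun k => if k == i then b else s k].

Definition is_NE n1 n2 (s1 : {ffun 'I_n1 -> bool}) (s2 : {ffun 'I_n2 -> bool}) :=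
  (forall (i : 'I_n1) (b : bool),
      ~ (loss1 (deviate s1 i b) s2 i < loss1 s1 s2 i)) /\
  (forall (j : 'I_n2) (b : bool),
      ~ (loss2 s1 (deviate s2 j b) j < loss2 s1 s2 j)).
End Game.

From mathcomp Require Import all_boot all_order all_algebra ring lra zify.
Set Implicit Arguments. Unset Strict Implicit. Unset Printing Implicit Defensive.
Import Order.TTheory GRing.Theory Num.Theory.
Local Open Scope ring_scope.

(* Let every user of N_2 and the first u users of N_1 take the direct path.
   A user prefers its direct path, at load T, to the indirect one, at load T'
   of the other source, iff (1 - q)(T + mu) <= T' + mu.  Take u largest in
   [1, n1] such that the direct users of N_1 have this preference (u = 1
   qualifies).  Maximality of u keeps the indirect users of N_1 where they
   are, and the failure of the preference at u + 1 bounds T_2 well enough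
   that the users of N_2 do not move either. *)

Definition threshold n u : {ffun 'I_n -> bool} := [ffun i : 'I_n => (i < u)%N].

Lemma ndp_threshold n u : (u <= n)%N -> ndp (threshold n u) = u.
Proof.
move=> le_un; have widen_inj : injective (widen_ord le_un) by move=> i j [/val_inj].
rewrite /ndp -[RHS]card_ord -(card_imset _ widen_inj).
apply: eq_card => i; rewrite !inE ffunE; apply/idP/imsetP => [lt_iu | [j _ ->]].
  by exists (Ordinal lt_iu) => //; apply: val_inj.
exact: (ltn_ord j).
Qed.

Lemma ndp_le n (s : {ffun 'I_n -> bool}) : (ndp s <= n)%N.
Proof. by rewrite /ndp -[n in (_ <= n)%N]card_ord max_card. Qed.

Lemma deviate_at n (s : {ffun 'I_n -> bool}) i b : deviate s i b i = b.
Proof. by rewrite ffunE eqxx. Qed.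

Lemma ndp_deviate n (s : {ffun 'I_n -> bool}) i b :
  (ndp (deviate s i b) + s i = ndp s + b)%N.
Proof.
rewrite /ndp (cardsD1 i [set k | deviate s i b k]) (cardsD1 i [set k | s k]).
have -> : [set k | deviate s i b k] :\ i = [set k | s k] :\ i.
  by apply/setP => k; rewrite !inE ffunE; case: (k == i).
by rewrite !inE deviate_at; case: b; case: (s i); lia.
Qed.

Section TwoSourceGame.
Variables (R : realFieldType) (phi mu q : R).
Hypotheses (phi_gt0 : 0 < phi) (mu_gt0 : 0 < mu) (q_le1 : q <= 1).

Lemma load1_ge0 n2 u1 u2 : 0 <= load1 phi q n2 u1 u2.
Proof. by rewrite /load1 addr_ge0 ?mulr_ge0 ?subr_ge0 ?(ltW phi_gt0). Qed.

Lemma load2_ge0 n1 u1 u2 : 0 <= load2 phi q n1 u1 u2.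
Proof. exact: load1_ge0. Qed.

Lemma loss_ip_sub_dp (T T' : R) : 0 <= T -> 0 <= T' ->
  loss_ip phi mu q T' - loss_dp phi mu T =
  phi * mu / ((T + mu) * (T' + mu)) * ((T' + mu) - (1 - q) * (T + mu)).
Proof.
move=> T_ge0 T'_ge0; rewrite /loss_ip /loss_dp.
by field; rewrite !lt0r_neq0 // ltr_wpDl.
Qed.

Lemma loss_dp_le_ip (T T' : R) : 0 <= T -> 0 <= T' ->
  (loss_dp phi mu T <= loss_ip phi mu q T') = ((1 - q) * (T + mu) <= T' + mu).
Proof.
move=> T_ge0 T'_ge0; rewrite -subr_ge0 loss_ip_sub_dp // pmulr_rge0 ?subr_ge0 //.
by rewrite !(mulr_gt0, invr_gt0, ltr_wpDl).
Qed.

Lemma loss_ip_le_dp (T T' : R) : 0 <= T -> 0 <= T' ->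
  (loss_ip phi mu q T' <= loss_dp phi mu T) = (T' + mu <= (1 - q) * (T + mu)).
Proof.
move=> T_ge0 T'_ge0; rewrite -subr_le0 loss_ip_sub_dp // pmulr_rle0 ?subr_le0 //.
by rewrite !(mulr_gt0, invr_gt0, ltr_wpDl).
Qed.

(* No user of N_1 gains by switching when u1 of its n1 users and u2 of the n2
   users of N_2 are on their direct paths; since [loss2] is [loss1] with the
   sources swapped, [stable1 n2 n1 u2 u1] says the same of N_2. *)
Definition stable1 n1 n2 u1 u2 : Prop :=
  ((0 < u1)%N ->
     (1 - q) * (load1 phi q n2 u1 u2 + mu) <= load2 phi q n1 u1.-1 u2 + mu) /\
  ((u1 < n1)%N ->
     load2 phi q n1 u1 u2 + mu <= (1 - q) * (load1 phi q n2 u1.+1 u2 + mu)).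

Lemma loss1_deviate_nlt n1 n2 (s1 : {ffun 'I_n1 -> bool}) (s2 : {ffun 'I_n2 -> bool}) :
  stable1 n1 n2 (ndp s1) (ndp s2) ->
  forall i b, ~ loss1 phi mu q (deviate s1 i b) s2 i < loss1 phi mu q s1 s2 i.
Proof.
move=> [stable_dp stable_ip] i b; apply/negP; rewrite -leNgt /loss1 deviate_at.
have := ndp_deviate s1 i b; have := ndp_le (deviate s1 i b).
case: b; case: (s1 i) => /= le_n1 ndp_dev.
- by have -> : ndp (deviate s1 i true) = ndp s1 by lia.
- have -> : ndp (deviate s1 i true) = (ndp s1).+1 by lia.
  by rewrite loss_ip_le_dp ?load1_ge0 ?load2_ge0 ?stable_ip //; lia.
- have -> : ndp (deviate s1 i false) = (ndp s1).-1 by lia.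
  by rewrite loss_dp_le_ip ?load1_ge0 ?load2_ge0 ?stable_dp //; lia.
- by have -> : ndp (deviate s1 i false) = ndp s1 by lia.
Qed.

Lemma loss2E n1 n2 (s1 : {ffun 'I_n1 -> bool}) (s2 : {ffun 'I_n2 -> bool}) :
  loss2 phi mu q s1 s2 =1 loss1 phi mu q s2 s1.
Proof. by []. Qed.

Lemma is_NE_intro n1 n2 (s1 : {ffun 'I_n1 -> bool}) (s2 : {ffun 'I_n2 -> bool}) :
  stable1 n1 n2 (ndp s1) (ndp s2) -> stable1 n2 n1 (ndp s2) (ndp s1) ->
  is_NE phi mu q s1 s2.
Proof.
move=> stable_s1 stable_s2; split; first exact: loss1_deviate_nlt.
by move=> j b; rewrite !loss2E; apply: loss1_deviate_nlt.
Qed.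

End TwoSourceGame.

Definition dp1_stable (R : realFieldType) (phi mu q : R) n1 n2 u : bool :=
  (1 - q) * (load1 phi q n2 u n2 + mu) <= load2 phi q n1 u.-1 n2 + mu.

Lemma dp1_stable1 (R : realFieldType) (phi mu q : R) n1 n2 :
  (0 < n1)%N -> 0 < phi -> 0 < mu -> 0 <= q <= 1 -> dp1_stable phi mu q n1 n2 1.
Proof.
move=> n1_gt0 phi_gt0 mu_gt0 /andP[q_ge0 q_le1].
rewrite /dp1_stable /load1 /load2 subnn subn0 mul0r mul0r addr0 mul1r.
have : (1 - q) * phi <= n1%:R * (1 - q) * phi.
  by rewrite -mulrA ler_peMl ?ler1n // mulr_ge0 ?subr_ge0 // ltW.
have : 0 <= n2%:R * phi by rewrite mulr_ge0 // ltW.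
have : (1 - q) * mu <= mu by apply: ler_piMl; lra.
lra.
Qed.

Lemma dp2_stable_threshold (R : realFieldType) (phi mu q : R) n1 n2 u :
  (n2 <= n1)%N -> (u <= n1)%N -> 0 < phi -> 0 < mu -> 0 <= q <= 1 ->
  ((u < n1)%N -> ~~ dp1_stable phi mu q n1 n2 u.+1) -> (0 < n2)%N ->
  (1 - q) * (load2 phi q n1 u n2 + mu) <= load1 phi q n2 u n2.-1 + mu.
Proof.
move=> le_n2n1 le_un1 phi_gt0 mu_gt0 /andP[q_ge0 q_le1] dp1_unstable n2_gt0.
rewrite {1}/load1 (_ : (n2 - n2.-1)%N = 1%N) ?mul1r; last by lia.
have shrink (x : R) : 0 <= x -> (1 - q) * x <= x.
  by move=> x_ge0; apply: ler_piMl; lra.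
have := shrink _ (ltW mu_gt0); have := shrink _ (load2_ge0 phi_gt0 q_le1 n1 u n2).
case: (ltnP u n1) => [lt_un1 | le_n1u].
  have := shrink _ (mulr_ge0 (ler0n R u) (ltW phi_gt0)).
  move: (dp1_unstable lt_un1); rewrite /dp1_stable -ltNge /= /load1 subnn -natr1.
  lra.
have -> : u = n1 by lia.
have : n2%:R * phi <= n1%:R * phi by rewrite ler_wpM2r ?ler_nat // ltW.
have : 0 <= (1 - q) * phi by rewrite mulr_ge0 ?subr_ge0 // ltW.
rewrite /load2 subnn; lra.
Qed.

Theorem theorem5 (R : realFieldType) (n1 n2 : nat) (phi mu q : R) :
  (n2 <= n1)%N -> (1 <= n1)%N -> 0 < phi -> 0 < mu -> 0 <= q <= 1 ->
  exists (s1 : {ffun 'I_n1 -> bool}) (s2 : {ffun 'I_n2 -> bool}),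
    is_NE phi mu q s1 s2 /\ (0 < ndp s1)%N /\ ndp s2 = n2.
Proof.
move=> le_n2n1 n1_gt0 phi_gt0 mu_gt0 q01; have /andP[_ q_le1] := q01.
pose feasible u := (u <= n1)%N && dp1_stable phi mu q n1 n2 u.
have feasible1 : feasible 1%N by rewrite /feasible n1_gt0 dp1_stable1.
have feasible_le u : feasible u -> (u <= n1)%N by case/andP.
case: (ex_maxnP (ex_intro feasible 1%N feasible1) feasible_le).
move=> u /andP[le_un1 dp1_u] u_max.
have u_gt0 : (0 < u)%N := u_max _ feasible1.
have dp1_unstable : (u < n1)%N -> ~~ dp1_stable phi mu q n1 n2 u.+1.
  move=> lt_un1; apply/negP => dp1_succ.
  by have := u_max u.+1; rewrite /feasible lt_un1 dp1_succ => /(_ isT); rewrite ltnn.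
exists (threshold n1 u), (threshold n2 n2); rewrite !ndp_threshold //.
split=> //; apply: is_NE_intro => //; rewrite !ndp_threshold //; split=> //.
- by move=> /dp1_unstable; rewrite /dp1_stable -ltNge => /ltW.
- exact: dp2_stable_threshold.
- by rewrite ltnn.
Qed.
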